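(* Let $\delta\in(0,1)$, $k\ge1$, and let $G=S_k$ be the star with one hub and $k$ leaves, with vertex set $V$ and $\mathcal H=\{\{i,j\}:\{i,j\}\in E(S_k)\}$. Then $$\mu_{\mathrm{leaf}}(V;r^{v^G}_{\mathcal H})=\delta+\frac{2(k-1)}{3}\delta^2\quad\text{for every leaf},\qquad \mu_{\mathrm{hub}}(V;r^{v^G}_{\mathcal H})=k\delta+\frac{k(k-1)}{3}\delta^2.$$
   Context: For a finite simple undirected graph $G=(V,E)$ and $\delta\in(0,1)$: for $S\subseteq V$, $G[S]$ is the induced subgraph and $t_{ij}(G[S])$ the shortest-path distance in $G[S]$ ($=\infty$ if disconnected), with $\delta^\infty:=0$. The distance-polynomial worth is $v^G(S):=\sum_{i\in S}\sum_{j\in S,\,j\neq i}\delta^{t_{ij}(G[S])}$. For a conference structure $\mathcal H$ (family of subsets of $V$ of size $\ge2$) and $C\subseteq V$, $C/\mathcal H$ is the partition of $C$ into classes connected via chains of pairwise-intersecting members of $\mathcal H$ contained in $C$, and $r^{v^G}_{\mathcal H}(C):=\sum_{B\in C/\mathcal H}v^G(B)$. For a TU game $u$ on finite player set $N$, $\mu_i(N;u):=\sum_{S\subseteq N\setminus\{i\}}\frac{|S|!(|N|-|S|-1)!}{|N|!}(u(S\cup\{i\})-u(S))$. *)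

From HB Require Import structures.
From mathcomp Require Import all_boot all_order all_algebra.
Set Implicit Arguments. Unset Strict Implicit. Unset Printing Implicit Defensive.
Import Order.TTheory GRing.Theory Num.Theory.
Local Open Scope ring_scope.

Section GraphGames.
Variable T : finType.
(* A finite simple undirected graph is a symmetric irreflexive relation e on T. *)
Variable e : rel T.

Definition walkb (S : {set T}) (n : nat) (i j : T) : bool :=
  [exists p : n.-tuple T,
     [&& path e i p, last i p == j & all (fun x => x \in S) (i :: p)]].

(* least n < #|T| admitting such a walk (= shortest path length in G[S]),
   or #|T| if there is none (i.e. i, j disconnected in G[S]: distance oo) *)
Definition dist_idx (S : {set T}) (i j : T) : nat :=
  find (fun n => walkb S n i j) (iota 0 #|T|).

(* delta ^ t_ij(G[S]) with delta^oo = 0 *)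
Definition dpow (R : pzRingType) (delta : R) (S : {set T}) (i j : T) : R :=
  if (dist_idx S i j < #|T|)%N then delta ^+ dist_idx S i j else 0.

Definition worth (R : pzRingType) (delta : R) (S : {set T}) : R :=
  \sum_(i in S) \sum_(j in S | j != i) dpow delta S i j.

(* C/H : classes of C connected by chains of pairwise-intersecting
   members of the conference structure H contained in C *)
Definition conf_rel (H : {set {set T}}) (C : {set T}) : rel T :=
  fun x y => [exists h in H, [&& h \subset C, x \in h & y \in h]].

Definition conf_partition (H : {set {set T}}) (C : {set T}) : {set {set T}} :=
  equivalence_partition (fun x y => connect (conf_rel H C) x y) C.

Definition conf_game (R : pzRingType) (v : {set T} -> R) (H : {set {set T}})
  (C : {set T}) : R :=
  \sum_(B in conf_partition H C) v B.

End GraphGames.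

Definition shapley (T : finType) (R : fieldType) (N : {set T})
  (u : {set T} -> R) (i : T) : R :=
  \sum_(S : {set T} | S \subset N :\ i)
     ((#|S|`! * (#|N| - #|S| - 1)`!)%:R / (#|N|`!)%:R) * (u (i |: S) - u S).

Definition star_edge (k : nat) : rel 'I_k.+1 :=
  fun x y => (x != y) && ((x == ord0) || (y == ord0)).

Definition edge_conf (T : finType) (e : rel T) : {set {set T}} :=
  [set [set x; y] | x in T, y in T & e x y].
Arguments star_edge k : clear implicits.

(* In the star, the conference game is u(C) = W(|C|) when the hub lies in C
   and 0 otherwise: with the hub present C/H is the single block C, whose
   2(n-1) ordered hub-leaf pairs are at distance 1 and (n-1)(n-2) ordered
   leaf pairs at distance 2, so W(n) = (n-1)(2 delta + (n-2) delta^2); without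
   the hub every block is edgeless and worthless.  Grouping coalitions by size,
   C(m,s) s!(m-s)! = m! turns the Shapley value of the hub into the average
   (1/n) sum_s W(s+1), and that of a leaf into
   (1/(n(n-1))) sum_s s (W(s+1) - W(s)); the power sums sum t and
   sum t(t-1) finish the computation. *)
From HB Require Import structures.
From mathcomp Require Import all_boot all_order all_algebra.
From mathcomp Require Import ring.
Set Implicit Arguments. Unset Strict Implicit. Unset Printing Implicit Defensive.
Import Order.TTheory GRing.Theory Num.Theory.
Local Open Scope ring_scope.

Lemma sum_subset_card (R : nmodType) (T : finType) (A : {set T}) (F : nat -> R) :
  \sum_(S : {set T} | S \subset A) F #|S| =
  \sum_(0 <= s < #|A|.+1) F s *+ 'C(#|A|, s).
Proof.
rewrite big_mkord.
rewrite (partition_big (fun S : {set T} => inord #|S| : 'I_#|A|.+1) xpredT) //=.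
apply: eq_bigr => s _; rewrite -cards_draws -sumr_const.
apply: eq_big => [S|S /andP[sSA /eqP <-]]; last first.
  by rewrite inordK // ltnS subset_leq_card.
rewrite inE; case sSA: (S \subset A) => //=.
have ltSA : (#|S| < #|A|.+1)%N by rewrite ltnS subset_leq_card.
by apply/eqP/eqP => [<-|cardS]; [rewrite inordK | apply: val_inj; rewrite /= inordK].
Qed.

Lemma sum_subsetD1 (R : nmodType) (T : finType) (B : {set T}) (x : T)
    (F : {set T} -> R) : x \in B ->
  \sum_(S : {set T} | S \subset B) F S =
  \sum_(S : {set T} | S \subset B :\ x) (F S + F (x |: S)).
Proof.
move=> xB; rewrite big_split /= (bigID (fun S : {set T} => x \in S)) /= addrC.
congr (_ + _).
  by apply: eq_bigl => S; rewrite subsetD1 andbC.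
rewrite (reindex_onto (fun S => x |: S) (fun S => S :\ x)) /=; last first.
  by move=> S /andP[_ xS]; rewrite setD1K.
apply: eq_bigl => S; rewrite setU11 andbT subsetD1 subUset sub1set xB /=.
apply/andP/andP => [[sSB /eqP <-]|[sSB xS]]; last by rewrite setU1K.
split; last by rewrite setD11.
by apply: subset_trans sSB; apply/subsetP => y; rewrite !inE => /andP[/negbTE ->].
Qed.

Section NatSums.
Variable R : numFieldType.

Lemma sumr_nat (n : nat) :
  \sum_(0 <= t < n) (t%:R : R) = n%:R * (n%:R - 1) / 2.
Proof.
elim: n => [|n IH]; first by rewrite big_geq // mul0r mul0r.
by rewrite big_nat_recr //= IH -natr1; field.
Qed.

Lemma sumr_nat_falling2 (n : nat) :
  \sum_(0 <= t < n) (t%:R * (t%:R - 1) : R) = n%:R * (n%:R - 1) * (n%:R - 2) / 3.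
Proof.
elim: n => [|n IH]; first by rewrite big_geq // !mul0r.
by rewrite big_nat_recr //= IH -natr1; field.
Qed.

End NatSums.

Section HubGame.
Variables (R : numFieldType) (T : finType) (h : T) (f : nat -> R).
Variable u : {set T} -> R.
Hypothesis u_hub : forall C, u C = if h \in C then f #|C| else 0.

Let fact_neq0 n : (n`!%:R : R) != 0.
Proof. by rewrite pnatr_eq0 -lt0n fact_gt0. Qed.

Let binomial_natr (m s : nat) : (s <= m)%N ->
  'C(m, s)%:R = m`!%:R / (s`!%:R * (m - s)`!%:R) :> R.
Proof.
by move=> lesm; rewrite -(bin_fact lesm) !natrM mulfK // mulf_neq0.
Qed.

Lemma shapley_hub_game :
  shapley [set: T] u h = #|T|%:R^-1 * \sum_(0 <= s < #|T|) f s.+1.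
Proof.
set m := #|[set: T] :\ h|.
have cardT : #|T| = m.+1 by rewrite -cardsT (cardsD1 h) in_setT.
rewrite /shapley cardsT cardT.
pose w s := (s`! * (m.+1 - s - 1)`!)%:R / (m.+1`!)%:R * f s.+1.
rewrite (eq_bigr (fun S : {set T} => w #|S|)); last first.
  move=> S sS; have hS : h \notin S by apply/negP => /(subsetP sS); rewrite setD11.
  by rewrite !u_hub setU11 (negbTE hS) subr0 cardsU1 hS.
rewrite (sum_subset_card _ w) -/m big_distrr /=.
apply: eq_big_nat => s /andP[_ lesm]; rewrite ltnS in lesm.
rewrite /w subn1 subSn //= -[_ *+ 'C(m, s)]mulr_natl binomial_natr // factS !natrM.
field; by rewrite !fact_neq0 addrC natr1 pnatr_eq0.
Qed.

Lemma shapley_hub_game_spoke i : i != h ->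
  shapley [set: T] u i =
  (#|T|%:R * (#|T|%:R - 1))^-1 * \sum_(0 <= s < #|T|) s%:R * (f s.+1 - f s).
Proof.
move=> ih; set m := #|[set: T] :\ i :\ h|.
have hi : h \in [set: T] :\ i by rewrite !inE eq_sym ih.
have cardT : #|T| = m.+2 by rewrite -cardsT (cardsD1 i) in_setT (cardsD1 h) hi.
rewrite /shapley cardsT cardT (sum_subsetD1 _ hi).
pose w s := (s.+1`! * (m.+2 - s.+1 - 1)`!)%:R / (m.+2`!)%:R * (f s.+2 - f s.+1).
rewrite (eq_bigr (fun S : {set T} => w #|S|)); last first.
  move=> S sS.
  have hS : h \notin S by apply/negP => /(subsetP sS); rewrite setD11.
  have iS : i \notin S by apply/negP => /(subsetP sS); rewrite !inE eqxx andbF.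
  rewrite !u_hub !inE eqxx orbT (negbTE hS) (eq_sym h i) (negbTE ih) /= subrr mulr0 add0r.
  by rewrite /w !cardsU1 !inE (negbTE ih) (negbTE iS) (negbTE hS).
rewrite (sum_subset_card _ w) -/m [in RHS]big_nat_recl // mul0r add0r big_distrr /=.
apply: eq_big_nat => s /andP[_ lesm]; rewrite ltnS in lesm.
rewrite /w subn1 subSS subSn //= -[_ *+ 'C(m, s)]mulr_natl binomial_natr // !factS !natrM.
field.
by rewrite !fact_neq0 !andbT -natrD -(natrB _ (_ : 1 <= 2 + m)%N) // !pnatr_eq0 add2n.
Qed.

End HubGame.

Section Walks.
Variables (T : finType) (e : rel T) (S : {set T}).

Lemma walkb0 i j : walkb e S 0 i j = (i == j) && (i \in S).
Proof.
apply/existsP/andP => [[p]|[/eqP <- iS]]; last by exists [tuple]; rewrite /= eqxx iS.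
by rewrite (tuple0 p) /= andbT => /andP[].
Qed.

Lemma walkb1 i j : walkb e S 1 i j = [&& e i j, i \in S & j \in S].
Proof.
apply/existsP/and3P => [[[[|x [|]] //= _]]|[eij iS jS]].
  by case/and3P => /andP[eix _] /eqP <- /and3P[iS xS _].
by exists [tuple j]; rewrite /= eij eqxx iS jS.
Qed.

Lemma walkb_edgeless n i j :
  (forall x y, x \in S -> y \in S -> ~~ e x y) -> i != j -> walkb e S n i j = false.
Proof.
move=> noE ij; apply/existsP => -[[[|x p] /= _]]; first by rewrite (negbTE ij).
by case/and5P => /andP[eix _] _ iS xS _; rewrite (negbTE (noE _ _ iS xS)) in eix.
Qed.

Variables (R : pzRingType) (delta : R).

Lemma dpow_shortest n i j : (n < #|T|)%N -> walkb e S n i j ->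
  (forall m, (m < n)%N -> ~~ walkb e S m i j) -> dpow e delta S i j = delta ^+ n.
Proof.
move=> ltnT walkn short; rewrite /dpow; suff -> : dist_idx e S i j = n by rewrite ltnT.
rewrite /dist_idx -(subnKC (ltnW ltnT)) iotaD find_cat size_iota.
have -> : has (fun m => walkb e S m i j) (iota 0 n) = false.
  by apply/hasPn => m; rewrite mem_iota => /short.
by rewrite -(subnSK ltnT) add0n /= walkn addn0.
Qed.

Lemma dpow_disconnected i j :
  (forall n, ~~ walkb e S n i j) -> dpow e delta S i j = 0.
Proof.
move=> nowalk; rewrite /dpow /dist_idx hasNfind ?size_iota ?ltnn //.
by apply/hasPn => n _; apply: nowalk.
Qed.

Lemma dpow_edge i j : i != j -> e i j -> i \in S -> j \in S ->
  dpow e delta S i j = delta.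
Proof.
move=> ij eij iS jS; rewrite (@dpow_shortest 1) ?expr1 ?walkb1 ?eij ?iS ?jS //.
  by apply/card_gt1P; exists i, j.
by case=> // _; rewrite walkb0 (negbTE ij).
Qed.

End Walks.

Section Star.
Variable k : nat.
Local Notation T := 'I_k.+1.
Local Notation e := (star_edge k).
Local Notation hub := (ord0 : T).

Lemma star_edge_hubl i : e hub i = (i != hub).
Proof. by rewrite /star_edge eqxx andbT eq_sym. Qed.

Lemma star_edge_hubr i : e i hub = (i != hub).
Proof. by rewrite /star_edge eqxx orbT andbT. Qed.

Lemma star_edge_leaves i j : i != hub -> j != hub -> e i j = false.
Proof. by move=> ih jh; rewrite /star_edge (negbTE ih) (negbTE jh) andbF. Qed.

Variables (R : comPzRingType) (delta : R).

Lemma dpow_star_leaves (S : {set T}) i j : i != hub -> j != hub -> i != j ->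
  i \in S -> j \in S -> hub \in S -> dpow e delta S i j = delta ^+ 2.
Proof.
move=> ih jh ij iS jS hS; apply: dpow_shortest.
- by apply/card_gt2P; exists i, j, hub; rewrite !inE ij jh eq_sym ih.
- apply/existsP; exists [tuple hub; j].
  by rewrite /= star_edge_hubr star_edge_hubl ih jh eqxx iS hS jS.
- by case=> [_|[]//]; rewrite ?walkb0 ?walkb1 ?(negbTE ij) ?star_edge_leaves.
Qed.

Lemma dpow_star_nohub (S : {set T}) i j : hub \notin S -> i != j ->
  dpow e delta S i j = 0.
Proof.
move=> hS ij; apply: dpow_disconnected => n; rewrite walkb_edgeless // => x y xS yS.
apply/andP => -[_ /orP[] /eqP xy]; by rewrite -xy ?xS ?yS in hS.
Qed.

Definition star_worth (n : nat) : R :=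
  (n%:R - 1) * (2 * delta + (n%:R - 2) * delta ^+ 2).

Lemma worth_star (S : {set T}) : hub \in S -> worth e delta S = star_worth #|S|.
Proof.
move=> hS; set L := #|S :\ hub|.
have cardS : #|S| = L.+1 by rewrite (cardsD1 hub) hS.
have row i : \sum_(j in S | j != i) dpow e delta S i j =
             \sum_(j in S :\ i) dpow e delta S i j.
  by apply: eq_bigl => j; rewrite !inE andbC.
have hub_row : \sum_(j in S :\ hub) dpow e delta S hub j = delta *+ L.
  rewrite -sumr_const; apply: eq_bigr => j; rewrite !inE => /andP[jh jS].
  by rewrite dpow_edge // 1?eq_sym // star_edge_hubl.
have leaf_row i : i \in S :\ hub ->
    \sum_(j in S :\ i) dpow e delta S i j = delta + delta ^+ 2 *+ L.-1.
  rewrite !inE => /andP[ih iS]; have hSi : hub \in S :\ i by rewrite !inE eq_sym ih.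
  have cardSi : #|S :\ i :\ hub| = L.-1.
    by rewrite /L (cardsD1 i (S :\ hub)) !inE ih iS /= setDDl setUC -setDDl.
  rewrite (big_setD1 hub hSi) /= dpow_edge ?star_edge_hubr // -cardSi -sumr_const.
  congr (_ + _); apply: eq_bigr => j; rewrite !inE => /and3P[jh ji jS].
  by rewrite dpow_star_leaves // eq_sym.
rewrite /worth (eq_bigr _ (fun i _ => row i)) (big_setD1 hub hS) /= hub_row.
rewrite (eq_bigr _ leaf_row) sumr_const -/L cardS /star_worth.
by case: (L) => [|l] /=; ring.
Qed.

Lemma worth_star_nohub (S : {set T}) : hub \notin S -> worth e delta S = 0.
Proof.
move=> hS; apply: big1 => i _; apply: big1 => j /andP[_ ji].
by rewrite dpow_star_nohub // eq_sym.
Qed.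

Lemma conf_rel_star_hub (C : {set T}) x : hub \in C -> x \in C -> x != hub ->
  conf_rel (edge_conf e) C x hub.
Proof.
move=> hC xC xh; apply/existsP; exists [set x; hub].
rewrite !inE eqxx orbT subUset !sub1set xC hC !andbT.
by apply/imset2P; exists x hub; rewrite ?inE ?star_edge_hubr.
Qed.

Lemma conf_partition_star (C : {set T}) : hub \in C ->
  conf_partition (edge_conf e) C = [set C].
Proof.
move=> hC; have conf_sym : connect_sym (conf_rel (edge_conf e) C).
  by apply: sym_connect_sym => x y; apply: eq_existsb => B; rewrite (andbC (x \in B)).
have class_C x : x \in C ->
    [set y in C | connect (conf_rel (edge_conf e) C) x y] = C.
  move=> xC; apply/setP => y; rewrite inE andb_idr // => yC.
  have to_hub z : z \in C -> connect (conf_rel (edge_conf e) C) z hub.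
    move=> zC; have [->|zh] := eqVneq z hub; first exact: connect0.
    exact/connect1/conf_rel_star_hub.
  by apply: connect_trans (to_hub _ xC) _; rewrite conf_sym to_hub.
apply/setP => B; rewrite inE; apply/imsetP/eqP => [[x xC ->]|->].
  exact: class_C.
by exists hub; rewrite ?class_C.
Qed.

Lemma star_game (C : {set T}) :
  conf_game (worth e delta) (edge_conf e) C =
  if hub \in C then star_worth #|C| else 0.
Proof.
rewrite /conf_game; case: ifP => hC.
  by rewrite conf_partition_star // big_set1 worth_star.
apply: big1 => B /imsetP[x xC ->]; apply: worth_star_nohub.
by rewrite inE hC.
Qed.

End Star.

Theorem mainTheorem4 (R : realFieldType) (delta : R) (k : nat)
  (hdelta : 0 < delta < 1) (hk : (1 <= k)%N) :
  let e := star_edge k in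
  let u := conf_game (worth e delta) (edge_conf e) in
  (forall i : 'I_k.+1, i != ord0 ->
     shapley [set: 'I_k.+1] u i = delta + 2 * (k%:R - 1) / 3 * delta ^+ 2) /\
  shapley [set: 'I_k.+1] u ord0 = k%:R * delta + k%:R * (k%:R - 1) / 3 * delta ^+ 2.
Proof.
(* The identities are polynomial in [delta]. *)
move=> e u; have u_hub C : u C = _ := star_game delta C.
have k_neq0 : k%:R != 0 :> R by rewrite pnatr_eq0 -lt0n.
have k1_neq0 : k%:R + 1 != 0 :> R by rewrite natr1 pnatr_eq0.
split=> [i ih|].
  apply: (eq_trans (shapley_hub_game_spoke u_hub ih)); rewrite card_ord.
  have step s : s%:R * (star_worth delta s.+1 - star_worth delta s) =
                2 * delta * s%:R + 2 * delta ^+ 2 * (s%:R * (s%:R - 1)).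
    by rewrite /star_worth -natr1; ring.
  rewrite (eq_big_nat _ _ (fun s _ => step s)) big_split /= -!mulr_sumr.
  by rewrite sumr_nat sumr_nat_falling2 -natr1; field; rewrite addrK k_neq0 k1_neq0.
apply: (eq_trans (shapley_hub_game u_hub)); rewrite card_ord.
have step s : star_worth delta s.+1 = 2 * delta * s%:R + delta ^+ 2 * (s%:R * (s%:R - 1)).
  by rewrite /star_worth -natr1; ring.
rewrite (eq_big_nat _ _ (fun s _ => step s)) big_split /= -!mulr_sumr.
by rewrite sumr_nat sumr_nat_falling2 -natr1; field.
Qed.
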